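(* Define polynomials by $P_1(x)=x$, $Q_1(x)=1$, and for $m>1$, $P_m(x)=P_{m-1}(x)^2+Q_{m-1}(x)^2$ and $Q_m(x)=P_{m-1}(x)Q_{m-1}(x)$. For $m\ge1$ let $B_m$ be the $m\times m$ coloring matrix with entries $b_{ij}=1$ if $i\ge j$ and $b_{ij}=0$ if $i<j$, and let $F^{(m)}(x)=\sum_{n\ge1}t_{B_m}^{(m)}(n)x^n$. Then for every $m\ge1$, $$x^{2^{m-1}}\left(\frac{1}{\sqrt{x}}Q_{m+1}\!\left(\frac{F^{(m)}(x)}{\sqrt{x}}\right)-P_{m+1}\!\left(\frac{F^{(m)}(x)}{\sqrt{x}}\right)\right)=0,$$ where the left-hand side, expanded, is a polynomial expression in $x$ and $F^{(m)}(x)$.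
   Context: A plane tree is an unlabeled rooted tree in which the children of every vertex are linearly ordered. A coloring matrix is an $m\times m$ matrix $A=(a_{ij})$ with entries in $\{0,1\}$. An $A$-coloring of a plane tree assigns to each vertex a color in $\{1,\dots,m\}$ such that whenever a vertex of color $j$ is a child of a vertex of color $i$, $a_{ij}=1$. Let $t_A^{(i)}(n)$ be the number of pairs (plane tree with $n$ vertices, $A$-coloring of it) in which the root has color $i$. *)

From mathcomp Require Import all_boot all_order all_algebra.
Set Implicit Arguments. Unset Strict Implicit. Unset Printing Implicit Defensive.
Import Order.TTheory GRing.Theory Num.Theory.

(* A pair (plane tree, coloring) is the same thing as a plane tree whose
   vertices carry a color label: CNode c children, children ordered. *)
Inductive ctree : Type := CNode of nat & seq ctree.

Definition croot (T : ctree) : nat := let: CNode c _ := T in c.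

Fixpoint csize (T : ctree) : nat :=
  let: CNode _ ch := T in (sumn (map csize ch)).+1.

Fixpoint is_coloring (m : nat) (A : nat -> nat -> bool) (T : ctree) : bool :=
  let: CNode c ch := T in
  [&& 0 < c <= m & all (fun U => A c (croot U) && is_coloring m A U) ch].

Definition has_card (X : Type) (P : X -> Prop) (k : nat) : Prop :=
  exists f : 'I_k -> X, injective f /\ forall x, P x <-> exists i, f i = x.

Definition t_count (m : nat) (A : nat -> nat -> bool) (i n k : nat) : Prop :=
  has_card (fun T : ctree => [/\ is_coloring m A T, croot T = i & csize T = n]) k.

Definition Bmat (i j : nat) : bool := (j <= i)%N.

Local Open Scope ring_scope.
Fixpoint PQ (k : nat) : {poly int} * {poly int} :=
  match k with
  | 0 => ('X, 1)
  | k.+1 => let: (p, q) := PQ k in (p ^+ 2 + q ^+ 2, p * q)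
  end.
Definition Ppoly (m : nat) : {poly int} := (PQ m.-1).1.
Definition Qpoly (m : nat) : {poly int} := (PQ m.-1).2.

Definition series := nat -> int.
Definition sadd (a b : series) : series := fun n => a n + b n.
Definition ssub (a b : series) : series := fun n => a n - b n.
Definition smul (a b : series) : series :=
  fun n => \sum_(i < n.+1) a i * b (n - i)%N.
Definition sconst (c : int) : series := fun n => if n is 0%N then c else 0.
Definition svar : series := fun n => if n == 1%N then 1 else 0.
Definition spow (a : series) (k : nat) : series := iter k (smul a) (sconst 1).
Definition seval (p : {poly int}) (s : series) : series :=
  foldr (fun c acc => sadd (sconst c) (smul s acc)) (sconst 0) (polyseq p).

(* Square-root variable: we work in Z[[t]] with x = t^2, so sqrt x = t.
   Given F(x) = sum_n f n x^n, [sub_sq f] is F(t^2), and [div_t y] is y/t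
   (valid when y has zero constant term, which holds for y = F(t^2) since
   there is no tree with 0 vertices). *)
Definition sub_sq (f : nat -> nat) : series :=
  fun k => if odd k then 0 else (f k./2)%:Z.
Definition div_t (y : series) : series := fun k => y k.+1.

(* A tree whose coloring is allowed by B_m (children never have a larger color
   than their parent) and whose root has color i is a root followed by a forest
   of trees with root colors in [1, i].  Hence the generating functions T_i of
   such trees satisfy T_i = x + S_i T_i with S_i = T_1 + ... + T_i, which also
   holds for i = 0 with T_0 = x; eliminating S_i gives
   x T_{i+1} = T_i (x + T_{i+1}^2).  With x = t^2 the series u_i = T_i / t
   therefore satisfy u_0 = t and u_{i+1} = u_i (1 + u_{i+1}^2).  The step
   (P, Q) |-> (P^2 + Q^2, P Q) divides the ratio r = Q / P by 1 + r^2, so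
   Q_{j+1}(u_m) = u_{m-j} P_{j+1}(u_m) for 1 <= j <= m; for j = m this reads
   Q_{m+1}(u_m) = t P_{m+1}(u_m), the claim up to the factor t^(2^m - 1). *)

From HB Require Import structures.
From mathcomp Require Import all_boot all_order all_algebra.
From mathcomp Require Import boolp ring zify.
Set Implicit Arguments. Unset Strict Implicit. Unset Printing Implicit Defensive.
Import GRing.Theory.

Record fps (R : Type) := FPS { coef : nat -> R }.
Arguments FPS {R}.

HB.instance Definition _ (R : Type) := gen_eqMixin (fps R).
HB.instance Definition _ (R : Type) := gen_choiceMixin (fps R).

Lemma fpsP (R : Type) (a b : fps R) : (forall n, coef a n = coef b n) -> a = b.
Proof. by case: a b => [fa] [fb] /= eq_ab; congr FPS; apply: funext. Qed.

Section FormalPowerSeries.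
Local Open Scope ring_scope.
Variable R : comNzRingType.
Implicit Types (a b c : fps R) (p q : {poly R}).

Definition fps_add a b := FPS (fun n => coef a n + coef b n).
Definition fps_opp a := FPS (fun n => - coef a n).
Definition fpsC (x : R) := FPS (fun n => if n is 0%N then x else 0).
Definition fps_mul a b := FPS (fun n => \sum_(i < n.+1) coef a i * coef b (n - i)).

Let fps_addA : associative fps_add.
Proof. by move=> a b c; apply: fpsP => n /=; rewrite addrA. Qed.
Let fps_addC : commutative fps_add.
Proof. by move=> a b; apply: fpsP => n /=; rewrite addrC. Qed.
Let fps_add0 : left_id (fpsC 0) fps_add.
Proof. by move=> a; apply: fpsP => -[|n] /=; rewrite add0r. Qed.
Let fps_addN : left_inverse (fpsC 0) fps_opp fps_add.
Proof. by move=> a; apply: fpsP => -[|n] /=; rewrite addNr. Qed.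
HB.instance Definition _ := GRing.isZmodule.Build (fps R) fps_addA fps_addC fps_add0 fps_addN.

(* The ring laws are inherited from {poly R}: the first n coefficients of a
   sum or product only depend on the first n coefficients of its factors. *)
Definition agree n a p := forall i, (i < n)%N -> coef a i = p`_i.

Lemma agree_poly n a : agree n a (\poly_(i < n) coef a i).
Proof. by move=> i lt_in; rewrite coef_poly lt_in. Qed.

Lemma agree_add n a b p q : agree n a p -> agree n b q -> agree n (fps_add a b) (p + q).
Proof. by move=> Ha Hb i lt_in; rewrite coefD -Ha // -Hb. Qed.

Lemma agree_mul n a b p q : agree n a p -> agree n b q -> agree n (fps_mul a b) (p * q).
Proof.
move=> Ha Hb i lt_in; rewrite coefM; apply: eq_bigr => j _.
by rewrite Ha ?Hb // (leq_ltn_trans _ lt_in) // ?leq_subr // -ltnS.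
Qed.

Lemma agree_one n : agree n (fpsC 1) 1.
Proof. by move=> [|i] _; rewrite coef1. Qed.

Lemma agree_eq n a b p : agree n a p -> agree n b p -> forall i, (i < n)%N -> coef a i = coef b i.
Proof. by move=> Ha Hb i lt_in; rewrite Ha // Hb. Qed.

Let fps_mulA : associative fps_mul.
Proof.
move=> a b c; apply: fpsP => n; pose t (d : fps R) := \poly_(i < n.+1) coef d i.
apply: (@agree_eq n.+1 _ _ (t a * t b * t c)) => //;
  last by repeat apply: agree_mul; exact: agree_poly.
by rewrite -mulrA; repeat apply: agree_mul; exact: agree_poly.
Qed.
Let fps_mulC : commutative fps_mul.
Proof.
move=> a b; apply: fpsP => n; pose t (d : fps R) := \poly_(i < n.+1) coef d i.
apply: (@agree_eq n.+1 _ _ (t a * t b)) => //; first by apply: agree_mul; exact: agree_poly.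
by rewrite mulrC; apply: agree_mul; exact: agree_poly.
Qed.
Let fps_mul1 : left_id (fpsC 1) fps_mul.
Proof.
move=> a; apply: fpsP => n.
apply: (@agree_eq n.+1 _ _ (1 * \poly_(i < n.+1) coef a i)) => //.
  by apply: agree_mul; [exact: agree_one | exact: agree_poly].
by rewrite mul1r; exact: agree_poly.
Qed.
Let fps_mulDl : left_distributive fps_mul fps_add.
Proof.
move=> a b c; apply: fpsP => n; pose t (d : fps R) := \poly_(i < n.+1) coef d i.
apply: (@agree_eq n.+1 _ _ ((t a + t b) * t c)) => //.
  by apply: agree_mul; [apply: agree_add|]; exact: agree_poly.
by rewrite mulrDl; apply: agree_add; apply: agree_mul; exact: agree_poly.
Qed.
Let fps_one_neq0 : fpsC 1 != 0.
Proof. by apply/eqP => /(congr1 (fun a => coef a 0)) /eqP; rewrite oner_eq0. Qed.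
HB.instance Definition _ :=
  GRing.Zmodule_isComNzRing.Build (fps R) fps_mulA fps_mulC fps_mul1 fps_mulDl fps_one_neq0.

Lemma coef_fps0 n : coef (0 : fps R) n = 0. Proof. by case: n. Qed.
Lemma coef_fps1 n : coef (1 : fps R) n = (n == 0%N)%:R. Proof. by case: n. Qed.
Lemma coef_fpsD a b n : coef (a + b) n = coef a n + coef b n. Proof. by []. Qed.
Lemma coef_fpsN a n : coef (- a) n = - coef a n. Proof. by []. Qed.
Lemma coef_fpsM a b n : coef (a * b) n = \sum_(i < n.+1) coef a i * coef b (n - i).
Proof. by []. Qed.

Lemma agreeM n a b p q : agree n a p -> agree n b q -> agree n (a * b) (p * q).
Proof. exact: agree_mul. Qed.

Lemma coef_fps_sum (I : Type) (r : seq I) (F : I -> fps R) n :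
  coef (\sum_(i <- r) F i) n = \sum_(i <- r) coef (F i) n.
Proof. by elim: r => [|i r IHr]; rewrite ?big_nil ?coef_fps0 // !big_cons coef_fpsD IHr. Qed.

Lemma coef_fps_natr (k : nat) n : coef (k%:R : fps R) n = if n is 0%N then k%:R else 0.
Proof.
elim: k => [|k IHk]; first by rewrite coef_fps0; case: n.
by rewrite !mulrS coef_fpsD coef_fps1 IHk; case: (n) => [|n'] /=; rewrite ?add0r.
Qed.

Lemma coef_fps_intr (k : int) n : coef (k%:~R : fps R) n = if n is 0%N then k%:~R else 0.
Proof.
case: k => k; first exact: coef_fps_natr.
by rewrite !NegzE !mulrNz -!pmulrn coef_fpsN coef_fps_natr; case: n; rewrite ?oppr0.
Qed.

Definition fpsX : fps R := FPS (fun n => if n == 1%N then 1 else 0).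

Lemma agreeX n : agree n fpsX 'X.
Proof. by move=> i _ /=; rewrite coefX; case: (i == 1%N). Qed.

Lemma coef_fpsXM a n : coef (fpsX * a) n = if n is n'.+1 then coef a n' else 0.
Proof.
rewrite (agreeM (@agreeX n.+1) (@agree_poly n.+1 a)) // coefXM.
by case: n => //= n; rewrite coef_poly ltnS ltnW.
Qed.

Lemma lreg_fpsX : GRing.lreg fpsX.
Proof.
move=> a b eq_ab; apply: fpsP => n.
by have := congr1 (fun c => coef c n.+1) eq_ab; rewrite !coef_fpsXM.
Qed.

Definition fps_divX a := FPS (fun n => coef a n.+1).

Lemma coef_fps_divX a n : coef (fps_divX a) n = coef a n.+1. Proof. by []. Qed.

Lemma fps_divXK a : coef a 0 = 0 -> fpsX * fps_divX a = a.
Proof. by move=> a0; apply: fpsP => -[|n]; rewrite coef_fpsXM. Qed.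

Definition fps_compX2 a := FPS (fun n => if odd n then 0 else coef a n./2).

Lemma coef_fps_compX2 a n : coef (fps_compX2 a) n = if odd n then 0 else coef a n./2.
Proof. by []. Qed.

Lemma agree_compX2 n a p : agree n a p -> agree n.*2 (fps_compX2 a) (p \Po 'X^2).
Proof.
move=> Ha i lt_in; rewrite coef_comp_poly_Xn // dvdn2 /=.
by case: (odd i) => //=; rewrite divn2 Ha // ltn_half_double.
Qed.

Lemma fps_compX2D a b : fps_compX2 (a + b) = fps_compX2 a + fps_compX2 b.
Proof. by apply: fpsP => n /=; case: (odd n); rewrite ?addr0. Qed.

Lemma fps_compX2_agree a b n (p : {poly R}) :
  agree n.+1 a p -> agree n.+1.*2 b (p \Po 'X^2) -> coef (fps_compX2 a) n = coef b n.
Proof.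
move=> Ha Hb; apply: (agree_eq (agree_compX2 Ha) Hb).
by rewrite -addnn addSn ltnS leq_addr.
Qed.

Lemma fps_compX2M a b : fps_compX2 (a * b) = fps_compX2 a * fps_compX2 b.
Proof.
apply: fpsP => n; pose t (d : fps R) := \poly_(i < n.+1) coef d i.
apply: (@fps_compX2_agree _ _ _ (t a * t b)); first by apply: agreeM; exact: agree_poly.
by rewrite comp_polyM; apply: agreeM; apply: agree_compX2; exact: agree_poly.
Qed.

Lemma fps_compX2X : fps_compX2 fpsX = fpsX ^+ 2.
Proof.
apply: fpsP => n; apply: (@fps_compX2_agree _ _ _ 'X); first exact: agreeX.
by rewrite comp_polyX expr2; apply: agreeM; exact: agreeX.
Qed.

End FormalPowerSeries.
Arguments fpsX {R}.

Section PQEval.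
Local Open Scope ring_scope.

Lemma Ppoly1 : Ppoly 1 = 'X. Proof. by []. Qed.
Lemma Qpoly1 : Qpoly 1 = 1. Proof. by []. Qed.
Lemma PpolyS n : Ppoly n.+2 = Ppoly n.+1 ^+ 2 + Qpoly n.+1 ^+ 2.
Proof. by rewrite /Ppoly /Qpoly /=; case: (PQ n). Qed.
Lemma QpolyS n : Qpoly n.+2 = Ppoly n.+1 * Qpoly n.+1.
Proof. by rewrite /Ppoly /Qpoly /=; case: (PQ n). Qed.

Variables (R : comNzRingType) (v : nat -> R) (m : nat).
Hypothesis vS : forall i, v i.+1 = v i * (1 + v i.+1 ^+ 2).

Let ev p := (map_poly intr p).[v m].
Let evS n : ev (Ppoly n.+2) = ev (Ppoly n.+1) ^+ 2 + ev (Qpoly n.+1) ^+ 2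
         /\ ev (Qpoly n.+2) = ev (Ppoly n.+1) * ev (Qpoly n.+1).
Proof.
rewrite /ev PpolyS QpolyS.
by split; rewrite ?(rmorphD, rmorphM, rmorphXn, hornerD, hornerM, horner_exp).
Qed.

Lemma Qpoly_ratio n : (n < m)%N -> ev (Qpoly n.+2) = v (m - n.+1) * ev (Ppoly n.+2).
Proof.
elim: n => [|n IHn] lt_nm; [have [-> ->] := evS 0 | have [-> ->] := evS n.+1].
  rewrite /ev Ppoly1 Qpoly1 map_polyX rmorph1 hornerX hornerC subn1.
  by rewrite -{1}(prednK lt_nm) vS prednK //; ring.
have vmn : v (m - n.+1) = v (m - n.+2) * (1 + v (m - n.+1) ^+ 2).
  by have -> : (m - n.+1 = (m - n.+2).+1)%N by lia; exact: vS.
by rewrite (IHn (ltnW lt_nm)) {1}vmn; ring.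
Qed.
End PQEval.

Fixpoint ctree_enc (T : ctree) : GenTree.tree nat :=
  let: CNode c ch := T in GenTree.Node c (map ctree_enc ch).
Fixpoint ctree_dec (t : GenTree.tree nat) : option ctree :=
  if t is GenTree.Node c ts then Some (CNode c (pmap ctree_dec ts)) else None.

Lemma ctree_encK : pcancel ctree_enc ctree_dec.
Proof.
rewrite /pcancel; fix IH 1 => -[c ch] /=; congr (Some (CNode c _)).
by elim: ch => //= U ch ->; rewrite IH.
Qed.
HB.instance Definition _ := Countable.copy ctree (pcan_type ctree_encK).

Lemma uniq_flatten_map_key (S T : eqType) (A : S -> seq T) (key : T -> S) (s : seq S) :
  uniq s -> (forall x, x \in s -> uniq (A x)) ->
  (forall x y, x \in s -> y \in A x -> key y = x) ->
  uniq (flatten [seq A x | x <- s]).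
Proof.
elim: s => //= x s IHs /andP[x_notin_s uniq_s] uniqA keyA.
rewrite cat_uniq uniqA ?mem_head // IHs //=; first last.
- by move=> y z y_s; apply: keyA; rewrite inE y_s orbT.
- by move=> y y_s; apply: uniqA; rewrite inE y_s orbT.
rewrite andbT; apply/hasP => -[z /flatten_mapP[y y_s z_Ay] z_Ax].
have eq_xy : x = y by rewrite -(keyA x z) ?mem_head // (keyA y z) // inE y_s orbT.
by rewrite eq_xy y_s in x_notin_s.
Qed.

Lemma has_card_size (X : eqType) (P : X -> Prop) k (s : seq X) :
  has_card P k -> uniq s -> (forall x, P x <-> x \in s) -> k = size s.
Proof.
move=> [g [inj_g Pg]] uniq_s Ps.
rewrite -[k]size_enum_ord -(size_map g); apply: perm_size; apply: uniq_perm.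
- by rewrite map_inj_uniq ?enum_uniq.
- exact: uniq_s.
move=> x; apply/mapP/idP => [[i _ ->] | /Ps /Pg [i <-]]; last by exists i; rewrite ?mem_enum.
by apply/Ps/Pg; exists i.
Qed.

(* All forests of total size [s] whose roots have colors in [1, i]; the first
   tree has root [c] and [a] vertices below the root.  [fuel >= s] bounds the
   recursion depth. *)
Fixpoint enum_forests (fuel i s : nat) : seq (seq ctree) :=
  match s, fuel with
  | 0, _ => [:: [::]]
  | _.+1, 0 => [::]
  | s'.+1, fuel'.+1 =>
    flatten [seq flatten [seq [seq CNode c ch :: fr | ch <- enum_forests fuel' c a,
                                                   fr <- enum_forests fuel' i (s' - a)]
                         | a <- iota 0 s'.+1] | c <- iota 1 i]
  end.

Definition is_forest (m i s : nat) (fr : seq ctree) : bool :=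
  all (fun U => (croot U <= i)%N && is_coloring m Bmat U) fr && (sumn (map csize fr) == s).

Lemma csize_gt0 T : (0 < csize T)%N. Proof. by case: T. Qed.

Lemma is_forest0 m i fr : is_forest m i 0 fr = (fr == [::]).
Proof.
case: fr => [|U fr]; rewrite /is_forest ?andbT //=.
by rewrite addn_eq0 eqn0Ngt csize_gt0 !andbF.
Qed.

Lemma is_forest_cons m i s c ch fr : (i <= m)%N ->
  is_forest m i s.+1 (CNode c ch :: fr) =
  [&& (0 < c <= i)%N, is_forest m c (sumn (map csize ch)) ch,
      (sumn (map csize ch) <= s)%N & is_forest m i (s - sumn (map csize ch)) fr].
Proof.
move=> le_im; rewrite /is_forest /= eqSS eqxx andbT.
set a := sumn _; set b := sumn _.
have -> : (a + b == s) = (a <= s)%N && (b == s - a) by apply/eqP/andP => -[]; lia.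
case: (leqP c i) => [le_ci | ]; rewrite ?andbF //= (leq_trans le_ci le_im).
by case: (0 < c)%N; case: (all _ ch); case: (all _ fr); rewrite ?andbF.
Qed.

Lemma mem_enum_forests m fuel i s fr : (i <= m)%N -> (s <= fuel)%N ->
  (fr \in enum_forests fuel i s) = is_forest m i s fr.
Proof.
elim: fuel i s fr => [|fuel IH] i [|s] fr le_im // le_s; rewrite ?is_forest0 ?inE //.
apply/idP/idP.
- case/flatten_mapP => c; rewrite mem_iota add1n ltnS => /andP[c_gt0 c_le_i].
  case/flatten_mapP => a; rewrite mem_iota add0n ltnS => /andP[_ le_as].
  case/allpairsP => -[ch fr'] [ch_in fr'_in ->].
  have le_cm : (c <= m)%N by lia.
  rewrite (IH c) // in ch_in; last by lia.
  rewrite (IH i) // in fr'_in; last by lia.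
  move: ch_in => /[dup] /andP[_ /eqP sz_ch] ch_in.
  by rewrite is_forest_cons // c_gt0 c_le_i sz_ch ch_in le_as fr'_in.
case: fr => [|[c ch] fr]; first by [].
rewrite is_forest_cons // => /and4P[/andP[c_gt0 c_le_i] ch_ok le_as fr_ok].
apply/flatten_mapP; exists c; first by rewrite mem_iota c_gt0 add1n ltnS.
apply/flatten_mapP; exists (sumn (map csize ch)); first by rewrite mem_iota add0n ltnS.
apply/allpairsP; exists (ch, fr); split => //.
  by rewrite (IH c) //; lia.
by rewrite (IH i) //; lia.
Qed.

Lemma enum_forestsS fuel i s : enum_forests fuel.+1 i s.+1 =
  flatten [seq flatten [seq [seq CNode c ch :: fr | ch <- enum_forests fuel c a,
                                                 fr <- enum_forests fuel i (s - a)]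
                       | a <- iota 0 s.+1] | c <- iota 1 i].
Proof. by []. Qed.

Lemma uniq_enum_forests fuel i s : (s <= fuel)%N -> uniq (enum_forests fuel i s).
Proof.
elim: fuel i s => [|fuel IH] i [|s] // le_s; rewrite enum_forestsS.
apply: (uniq_flatten_map_key (key := fun fr => if fr is CNode c _ :: _ then c else 0%N)).
- exact: iota_uniq.
- move=> c _.
  apply: (uniq_flatten_map_key
           (key := fun fr => if fr is CNode _ ch :: _ then sumn (map csize ch) else 0%N)).
  + exact: iota_uniq.
  + move=> a; rewrite mem_iota add0n ltnS => /andP[_ le_as].
    apply: allpairs_uniq; rewrite ?IH //; try lia.
    by move=> [ch1 fr1] [ch2 fr2] _ _ [-> ->].
  move=> a y; rewrite mem_iota add0n ltnS => /andP[_ le_as].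
  case/allpairsP => -[ch fr] [ch_in _ ->].
  rewrite (@mem_enum_forests c) // in ch_in; last by lia.
  by case/andP: ch_in => _ /eqP.
by move=> c _ _ /flatten_mapP[a _ /allpairsP[[ch fr] [_ _ ->]]].
Qed.

Definition nforests (i s : nat) : nat := size (enum_forests s i s).

Lemma size_enum_forests fuel i s : (s <= fuel)%N -> size (enum_forests fuel i s) = nforests i s.
Proof.
move=> le_s; apply: perm_size; apply: uniq_perm; rewrite ?uniq_enum_forests // => fr.
by rewrite !(@mem_enum_forests i).
Qed.

Lemma nforestsS i s : nforests i s.+1 =
  (\sum_(1 <= c < i.+1) \sum_(0 <= a < s.+1) nforests c a * nforests i (s - a))%N.
Proof.
rewrite /nforests enum_forestsS /index_iota subSS !subn0.
rewrite size_flatten sumnE !big_map; apply: eq_bigr => c _.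
rewrite size_flatten sumnE !big_map; apply: eq_big_seq => a.
rewrite mem_iota add0n ltnS => /andP[_ le_as].
by rewrite size_allpairs !size_enum_forests //; lia.
Qed.

Definition enum_trees (m n : nat) : seq ctree :=
  if n is n'.+1 then map (CNode m) (enum_forests n' m n') else [::].

Lemma size_enum_trees m n : size (enum_trees m n) = if n is n'.+1 then nforests m n' else 0%N.
Proof. by case: n => //= n; rewrite size_map. Qed.

Lemma uniq_enum_trees m n : uniq (enum_trees m n).
Proof. by case: n => //= n; rewrite map_inj_uniq ?uniq_enum_forests // => ? ? []. Qed.

Lemma mem_enum_trees m n T : (0 < m)%N ->
  [/\ is_coloring m Bmat T, croot T = m & csize T = n] <-> T \in enum_trees m n.
Proof.
case: T => c ch m_gt0; case: n => [|n] /=.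
  by split => // -[].
split => [[/andP[_ ch_ok] c_m /succn_inj sz] | /mapP[fr fr_in [-> ->]]].
  by rewrite c_m in ch_ok *; apply/map_f; rewrite (@mem_enum_forests m) // /is_forest ch_ok sz eqxx.
move: fr_in; rewrite (@mem_enum_forests m) // => /andP[fr_ok /eqP sz].
by rewrite m_gt0 leqnn fr_ok sz.
Qed.

Lemma t_count_nforests m n k : (0 < m)%N -> t_count m Bmat m n k ->
  k = if n is n'.+1 then nforests m n' else 0%N.
Proof.
move=> m_gt0 count_k; rewrite -size_enum_trees.
by apply: has_card_size count_k (uniq_enum_trees m n) _ => T; apply: mem_enum_trees.
Qed.

Local Open Scope ring_scope.

Definition forestGF (i : nat) : fps int := FPS (fun s => (nforests i s)%:R).
Definition treeGF (i : nat) : fps int := fpsX * forestGF i.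
Definition treeGF_upto (i : nat) : fps int := \sum_(1 <= c < i.+1) treeGF c.

Lemma coef_forestGF i s : coef (forestGF i) s = (nforests i s)%:R.
Proof. by []. Qed.

Lemma coef_treeGFM c b n :
  coef (treeGF c * b) n.+1 = \sum_(a < n.+1) (nforests c a)%:R * coef b (n - a).
Proof. by rewrite -mulrA coef_fpsXM coef_fpsM. Qed.

Lemma forestGF_eq i : forestGF i = 1 + treeGF_upto i * forestGF i.
Proof.
apply: fpsP => -[|s]; rewrite coef_fpsD coef_fps1 /treeGF_upto mulr_suml coef_fps_sum.
  by rewrite big1 ?addr0 // => c _; rewrite -mulrA coef_fpsXM.
rewrite add0r coef_forestGF nforestsS natr_sum; apply: eq_bigr => c _.
by rewrite coef_treeGFM natr_sum big_mkord; apply: eq_bigr => a _; rewrite natrM.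
Qed.

Lemma treeGF_eq i : treeGF i = fpsX + treeGF_upto i * treeGF i.
Proof. by rewrite /treeGF {1}forestGF_eq; ring. Qed.

Lemma treeGF_uptoS i : treeGF_upto i.+1 = treeGF_upto i + treeGF i.+1.
Proof. by rewrite /treeGF_upto big_nat_recr. Qed.

Lemma treeGFS i : fpsX * treeGF i.+1 = treeGF i * (fpsX + treeGF i.+1 ^+ 2).
Proof.
have Ta := treeGF_eq i; have Tb := treeGF_eq i.+1; rewrite treeGF_uptoS in Tb.
apply/eqP; rewrite -subr_eq0.
set x := fpsX; set a := treeGF i; set b := treeGF i.+1; set s := treeGF_upto i.
(* The two brackets vanish by Ta and Tb. *)
have -> : x * b - a * (x + b ^+ 2) =
          b * (x + s * a - a) - a * (x + (s + b) * b - b) by ring.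
by rewrite -Ta -Tb !subrr !mulr0 subrr.
Qed.

Lemma treeGF0 : treeGF 0 = fpsX.
Proof. by rewrite treeGF_eq /treeGF_upto big_geq ?mul0r ?addr0. Qed.

(* [uGF i] is u_i = T_i(x) / sqrt x written in the variable t = sqrt x. *)
Definition uGF (i : nat) : fps int := fps_divX (fps_compX2 (treeGF i)).

Lemma compX2_treeGF i : fps_compX2 (treeGF i) = fpsX * uGF i.
Proof. by rewrite fps_divXK //; exact: (coef_fpsXM _ 0). Qed.

Lemma uGF0 : uGF 0 = fpsX.
Proof. by apply: lreg_fpsX; rewrite -compX2_treeGF treeGF0 fps_compX2X. Qed.

Lemma uGFS i : uGF i.+1 = uGF i * (1 + uGF i.+1 ^+ 2).
Proof.
move: (treeGFS i) (compX2_treeGF i) (compX2_treeGF i.+1).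
move: (treeGF i) (treeGF i.+1) (uGF i) (uGF i.+1) => a b u v eq_ab Ha Hb.
have := congr1 (@fps_compX2 _) eq_ab.
rewrite expr2 !(fps_compX2M, fps_compX2D) fps_compX2X Ha Hb => eq_uv.
do 3!apply: lreg_fpsX.
transitivity (fpsX ^+ 2 * (fpsX * v)); first by ring.
by rewrite eq_uv; ring.
Qed.

Lemma ssubE (a b : series) k : ssub a b k = coef (FPS a - FPS b) k.
Proof. by []. Qed.

Lemma FPS_sadd (a b : series) : FPS (sadd a b) = FPS a + FPS b.
Proof. by []. Qed.

Lemma FPS_smul (a b : series) : FPS (smul a b) = FPS a * FPS b.
Proof. by []. Qed.

Lemma FPS_spow_svar e : FPS (spow svar e) = fpsX ^+ e.
Proof. by elim: e => // e IHe; rewrite exprS -IHe. Qed.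

Lemma FPS_sconst c : FPS (sconst c) = c%:~R.
Proof. by apply: fpsP => n; rewrite coef_fps_intr intz. Qed.

Lemma FPS_seval p s : FPS (seval p s) = (map_poly intr p).[FPS s].
Proof.
rewrite map_polyE horner_Poly /seval.
elim: (polyseq p) => [|c cs IHcs] /=; first exact: FPS_sconst.
by rewrite FPS_sadd FPS_smul IHcs FPS_sconst mulrC addrC.
Qed.

Theorem theorem43 (m : nat) (f : nat -> nat) :
  (0 < m)%N ->
  (forall n : nat, t_count m Bmat m n (f n)) ->
  forall k : nat,
    ssub (smul (spow svar (2 ^ m).-1) (seval (Qpoly m.+1) (div_t (sub_sq f))))
         (smul (spow svar (2 ^ m)) (seval (Ppoly m.+1) (div_t (sub_sq f)))) k = 0.
Proof.
move=> m_gt0 count_f k.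
have f_treeGF n : (f n)%:Z = coef (treeGF m) n.
  rewrite (t_count_nforests m_gt0 (count_f n)) coef_fpsXM.
  by case: n => // n; rewrite coef_forestGF natz.
have u_m : FPS (div_t (sub_sq f)) = uGF m.
  by apply: fpsP => n; rewrite coef_fps_divX coef_fps_compX2 -f_treeGF.
have QP : (map_poly intr (Qpoly m.+1)).[uGF m] =
          fpsX * (map_poly intr (Ppoly m.+1)).[uGF m].
  by have := @Qpoly_ratio _ _ m uGFS m.-1; rewrite prednK // subnn uGF0; apply.
rewrite ssubE !FPS_smul !FPS_spow_svar !FPS_seval u_m QP.
rewrite -[in X in _ - X](prednK (expn_gt0 2 m)).
by rewrite exprS mulrCA mulrA subrr coef_fps0.
Qed.
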